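(* Let $G$ be a finite group which is an $\mathcal{L}(\operatorname{Aut}(G))$-equational domain. Let $H=\prod_{i\in\mathbb{Z}}G$ be the direct power of $G$ indexed by $\mathbb{Z}$, with elements $(g_i\mid i\in\mathbb{Z})$. For $\phi\in\operatorname{Aut}(G)$ let $f_\phi((g_i\mid i\in\mathbb{Z}))=(\phi(g_i)\mid i\in\mathbb{Z})$, let $\sigma((g_i\mid i\in\mathbb{Z}))=(g_{i+1}\mid i\in\mathbb{Z})$, and let $A\subseteq\operatorname{Aut}(H)$ be the group generated by $\sigma$ and all $f_\phi$, $\phi\in\operatorname{Aut}(G)$. Then the $\mathcal{L}(A)$-group $H$ is $\mathbf{q}_\omega$-compact.
   Context: For a group $K$ and a subgroup $B\subseteq\operatorname{Aut}(K)$, $\mathcal{L}(B)=\{\cdot,{}^{-1},1\}\cup\{\psi\mid\psi\in B\}$ is the group language with a unary function symbol for each $\psi\in B$, interpreted as $\psi$. An $\mathcal{L}(B)$-equation in variables $X=\{x_1,\dots,x_n\}$ is $t(X)=1$ with $t$ an $\mathcal{L}(B)$-term (equivalently a product $\psi_1(x_{i_1}^{\varepsilon_1})\cdots\psi_k(x_{i_k}^{\varepsilon_k})$, $\psi_j\in B$, $\varepsilon_j=\pm1$); an $\mathcal{L}(B)$-system is any set of such equations, and $V_K(S)\subseteq K^n$ is its solution set. $K$ is an $\mathcal{L}(B)$-equational domain if for every $n$ the union of any two subsets of $K^n$ of the form $V_K(S)$ is again of this form. The $\mathcal{L}(B)$-group $K$ is $\mathbf{q}_\omega$-compact if for every $\mathcal{L}(B)$-system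 $S$ and every $\mathcal{L}(B)$-equation $w(X)=1$ with $V_K(S)\subseteq V_K(w(X)=1)$ there is a finite subsystem $S'\subseteq S$ with $V_K(S')\subseteq V_K(w(X)=1)$. *)

From mathcomp Require Import all_boot all_algebra all_fingroup.
From Stdlib Require List.
Set Implicit Arguments. Unset Strict Implicit. Unset Printing Implicit Defensive.

Inductive term (K : Type) (B : (K -> K) -> Prop) (n : nat) : Type :=
| tVar : 'I_n -> term B n
| tOne : term B n
| tMul : term B n -> term B n -> term B n
| tInv : term B n -> term B n
| tApp : forall psi : K -> K, B psi -> term B n -> term B n.

Section Eval.
Variables (K : Type) (mul : K -> K -> K) (inv : K -> K) (one : K).
Variables (B : (K -> K) -> Prop) (n : nat).

Fixpoint teval (v : 'I_n -> K) (t : term B n) : K :=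
  match t with
  | tVar i => v i
  | tOne => one
  | tMul t1 t2 => mul (teval v t1) (teval v t2)
  | tInv t1 => inv (teval v t1)
  | tApp psi _ t1 => psi (teval v t1)
  end.

Definition solset (S : term B n -> Prop) : ('I_n -> K) -> Prop :=
  fun v => forall t, S t -> teval v t = one.
End Eval.

Definition equational_domain (K : Type) (mul : K -> K -> K) (inv : K -> K)
  (one : K) (B : (K -> K) -> Prop) : Prop :=
  forall (n : nat) (S1 S2 : term B n -> Prop),
    exists S3 : term B n -> Prop,
      forall v, solset mul inv one S3 v <->
                (solset mul inv one S1 v \/ solset mul inv one S2 v).

Definition qomega_compact (K : Type) (mul : K -> K -> K) (inv : K -> K)
  (one : K) (B : (K -> K) -> Prop) : Prop :=
  forall (n : nat) (S : term B n -> Prop) (w : term B n),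
    (forall v, solset mul inv one S v -> teval mul inv one v w = one) ->
    exists s : seq (term B n),
      (forall t, List.In t s -> S t) /\
      (forall v, solset mul inv one (fun t => List.In t s) v ->
                 teval mul inv one v w = one).

Definition AutG (gT : finGroupType) (f : gT -> gT) : Prop :=
  bijective f /\ {morph f : x y / (x * y)%g}.

Definition powZ (gT : finGroupType) := int -> gT.
Definition mulH (gT : finGroupType) (g h : powZ gT) : powZ gT :=
  fun i => (g i * h i)%g.
Definition invH (gT : finGroupType) (g : powZ gT) : powZ gT :=
  fun i => (g i)^-1%g.
Definition oneH (gT : finGroupType) : powZ gT := fun _ => 1%g.

Definition shiftH (gT : finGroupType) (g : powZ gT) : powZ gT :=
  fun i => g (i + 1)%R.
Definition liftH (gT : finGroupType) (phi : gT -> gT) (g : powZ gT) : powZ gT :=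
  fun i => phi (g i).

Inductive genA (gT : finGroupType) : (powZ gT -> powZ gT) -> Prop :=
| genA_shift : genA (@shiftH gT)
| genA_lift : forall phi, AutG phi -> genA (liftH phi)
| genA_id : genA id
| genA_comp : forall f g, genA f -> genA g -> genA (f \o g)
| genA_inv : forall f g, genA f -> cancel f g -> cancel g f -> genA g.

From mathcomp Require Import all_boot all_algebra all_fingroup.
From mathcomp Require Import zify.
From Stdlib Require Import FunctionalExtensionality Classical ClassicalEpsilon.
Set Implicit Arguments. Unset Strict Implicit. Unset Printing Implicit Defensive.
Import GRing.Theory.
Local Open Scope ring_scope.

(* Every element of A acts as g |-> phi o g o sigma^a with phi bijective, so
   L(A)-terms commute with the shift and the i-th coordinate of a term
   depends only on the coordinates of its arguments in a window around i.
   Hence solution sets are closed in the compact space (G^Z)^n, and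
   {v | w(v)_0 <> 1} is clopen.  If no finite subsystem of S implied w = 1,
   shifting would give, for every finite subsystem, a solution v with
   w(v)_0 <> 1; by compactness (Koenig's lemma: the windows of the points
   range over finite sets) some point of V(S) has w(v)_0 <> 1. *)

Lemma dependent_choice_nat (U : Type) (P : nat -> U -> Prop)
    (R : nat -> U -> U -> Prop) (u0 : U) :
  P 0%N u0 -> (forall N u, P N u -> exists u', P N.+1 u' /\ R N u u') ->
  exists s : nat -> U, forall N, P N (s N) /\ R N (s N) (s N.+1).
Proof.
move=> P0 next.
pose f N u := epsilon (inhabits u0) (fun u' => P N.+1 u' /\ R N u u').
have fP N u : P N u -> P N.+1 (f N u) /\ R N u (f N u).
  by move=> Pu; exact: epsilon_spec (next N u Pu).
pose s := fix s N := if N is N'.+1 then f N' (s N') else u0.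
have sP N : P N (s N) by elim: N => [|N IH] //=; exact: (fP N _ IH).1.
by exists s => N; split; [|exact: (fP N _ (sP N)).2].
Qed.

Definition downward_directed (X U : Type) (Q : X -> U -> Prop) :=
  forall x y, exists z, forall v, Q z v -> Q x v /\ Q y v.

Lemma directed_finite_common_point (T : finType) (X : Type) (x0 : X)
    (A : X -> T -> Prop) :
  downward_directed A -> (forall x, exists t, A x t) -> exists t, forall x, A x t.
Proof.
move=> dirA Ane; apply: NNPP => none.
have miss t : exists x, ~ A x t.
  by apply: not_all_ex_not; apply: (not_ex_all_not _ _ none).
have cover (s : seq T) : exists x, forall t, t \in s -> ~ A x t.
  elim: s => [|t s [x Hx]]; first by exists x0.
  have [y Hy] := miss t; have [z Hz] := dirA x y.
  exists z => t' /predU1P [-> | t's] /Hz [Ax Ay]; [exact: Hy Ay | exact: Hx t' t's Ax].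
have [x Hx] := cover (enum T); have [t At] := Ane x.
by apply: (Hx t _ At); rewrite mem_enum.
Qed.

Section Windows.
Variables (T J : finType).
Implicit Types (u v : J -> int -> T) (N M : nat).

Definition ball (i : int) (r : nat) : pred int := fun k => (absz (k - i) <= r)%N.

Definition agree_on (D : pred int) u v := forall j k, D k -> u j k = v j k.

Definition shiftv (c : int) v : J -> int -> T := fun j k => v j (k + c).

Definition window M v : {ffun J * 'I_(M.*2.+1) -> T} :=
  [ffun p : J * 'I_(M.*2.+1) => v p.1 (p.2%:Z - M%:Z)].

Lemma window_agree M u v : window M u = window M v -> agree_on (ball 0 M) u v.
Proof.
move=> uv j k; rewrite /ball subr0 => kM.
have kM' : (absz (k + M%:Z)%R < M.*2.+1)%N by lia.
have := congr1 (fun f : {ffun _ -> T} => f (j, Ordinal kM')) uv.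
rewrite !ffunE /=.
by have -> : (absz (k + M%:Z))%:Z - M%:Z = k by lia.
Qed.

Lemma window_profile (X : Type) (x0 : X) (Q : X -> (J -> int -> T) -> Prop) M :
  downward_directed Q -> (forall x, exists v, Q x v) ->
  exists u, forall x, exists v, Q x v /\ agree_on (ball 0 M) u v.
Proof.
move=> dirQ Qne.
pose A x q := exists v, Q x v /\ window M v = q.
have [q Aq] : exists q, forall x, A x q.
  apply: (directed_finite_common_point x0).
  - move=> x y; have [z Hz] := dirQ x y; exists z => q [v [/Hz[Qx Qy] <-]].
    by split; exists v.
  - by move=> x; have [v Qv] := Qne x; exists (window M v), v.
have [u [_ uq]] := Aq x0; exists u => x.
have [v [Qv vq]] := Aq x; exists v; split=> //.
by apply: window_agree; rewrite uq vq.
Qed.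

Lemma coherent_limit (s : nat -> J -> int -> T) :
  (forall N, agree_on (ball 0 N) (s N) (s N.+1)) ->
  forall N, agree_on (ball 0 N) (fun j k => s (absz k) j k) (s N).
Proof.
move=> coh.
have mono N M : (N <= M)%N -> agree_on (ball 0 N) (s N) (s M).
  move=> /subnK <-; elim: (M - N)%N => [|d IH] j k kN //.
  rewrite IH // addSn coh // /ball; move: kN; rewrite /ball; lia.
by move=> N j k; rewrite /ball subr0 => kN; apply: mono; rewrite // /ball subr0.
Qed.

Lemma cluster_point (X : Type) (x0 : X) (Q : X -> (J -> int -> T) -> Prop) :
  downward_directed Q -> (forall x, exists v, Q x v) ->
  exists v, forall x N, exists v', Q x v' /\ agree_on (ball 0 N) v v'.
Proof.
move=> dirQ Qne.
pose good N u := forall x, exists v, Q x v /\ agree_on (ball 0 N) u v.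
have [u0 good0] : exists u, good 0%N u := window_profile x0 0 dirQ Qne.
have refine N u : good N u -> exists u', good N.+1 u' /\ agree_on (ball 0 N) u u'.
  move=> goodu.
  have dirQ' : downward_directed (fun x v => Q x v /\ agree_on (ball 0 N) u v).
    move=> x y; have [z Hz] := dirQ x y; exists z => v [/Hz[Qx Qy] uv].
    by split; split.
  have [u' good'] := window_profile x0 N.+1 dirQ' goodu.
  exists u'; split=> [x | j k kN].
    by have [v [[Qv _] u'v]] := good' x; exists v.
  have [v [[_ uv] u'v]] := good' x0.
  by rewrite uv // u'v //; move: kN; rewrite /ball; lia.
have [s sP] := dependent_choice_nat good0 refine.
exists (fun j k => s (absz k) j k) => x N.
have [v [Qv sv]] := (sP N).1 x; exists v; split=> // j k kN.
by rewrite (coherent_limit (fun N => (sP N).2) j kN) sv.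
Qed.

End Windows.

Lemma genA_shift_lift (gT : finGroupType) (f : powZ gT -> powZ gT) : genA f ->
  exists (a : int) (phi : gT -> gT), bijective phi /\
    forall g i, f g i = phi (g (i + a)).
Proof.
elim=> {f}.
- by exists 1, id; split=> //; exists id.
- by move=> phi [phi_bij _]; exists 0, phi; split=> // g i; rewrite addr0.
- by exists 0, id; split=> [|g i]; [exists id | rewrite addr0].
- move=> f g _ [a [phi [phi_bij fE]]] _ [b [psi [psi_bij gE]]].
  exists (a + b), (phi \o psi); split; first exact: bij_comp.
  by move=> h i /=; rewrite fE gE addrA.
- move=> f g _ [a [phi [[psi phiK psiK] fE]]] fK gK.
  exists (- a), psi; split=> [|h i]; first exact: Bijective psiK phiK.
  have hE : h = f (fun k => psi (h (k - a))).
    by apply: functional_extensionality => k; rewrite fE addrK psiK.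
  by rewrite {1}hE fK.
Qed.

Section Terms.
Variables (gT : finGroupType) (n : nat).
Local Notation point := ('I_n -> powZ gT).
Local Notation ev := (teval (@mulH gT) (@invH gT) (@oneH gT)).
Local Notation sol := (solset (@mulH gT) (@invH gT) (@oneH gT)).
Implicit Types (t w : term (@genA gT) n) (S : term (@genA gT) n -> Prop).
Implicit Types (v : point).

Lemma teval_shift t c v k : ev (shiftv c v) t k = ev v t (k + c).
Proof.
elim: t k => [j||t1 IH1 t2 IH2|t1 IH1|psi Apsi t1 IH1] k //=.
- by rewrite /mulH IH1 IH2.
- by rewrite /invH IH1.
- have [a [phi [_ psiE]]] := genA_shift_lift Apsi.
  by rewrite !psiE IH1 addrAC.
Qed.

Lemma solset_shift S c v :
  sol S v -> sol S (shiftv c v).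
Proof.
move=> Sv t St; apply: functional_extensionality => k.
by rewrite teval_shift (Sv t St).
Qed.

Lemma shift_failure_to_origin S w v :
  sol S v -> ev v w <> oneH gT -> exists v', sol S v' /\ ev v' w 0 <> 1%g.
Proof.
move=> Sv wv; have [i wi] : exists i, ev v w i <> 1%g.
  by apply: not_all_ex_not => w1; apply/wv/functional_extensionality.
by exists (shiftv i v); split; [exact: solset_shift | rewrite teval_shift add0r].
Qed.

Lemma teval_local t : exists r : nat, forall v v' i,
  agree_on (ball i r) v v' -> ev v t i = ev v' t i.
Proof.
elim: t => [j||t1 [r1 IH1] t2 [r2 IH2]|t1 [r1 IH1]|psi Apsi t1 [r1 IH1]].
- by exists 0%N => v v' i vv'; apply: vv'; rewrite /ball subrr.
- by exists 0%N.
- exists (maxn r1 r2) => v v' i vv' /=.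
  by rewrite /mulH (IH1 v v') ?(IH2 v v') // => j k; rewrite /ball => ?;
    apply: vv'; rewrite /ball; lia.
- by exists r1 => v v' i vv' /=; rewrite /invH (IH1 v v').
- have [a [phi [_ psiE]]] := genA_shift_lift Apsi.
  exists (r1 + absz a)%N => v v' i vv' /=; rewrite !psiE (IH1 v v') //.
  by move=> j k; rewrite /ball => ?; apply: vv'; rewrite /ball; lia.
Qed.

Lemma teval_continuous t v i : exists N : nat, forall v',
  agree_on (ball 0 N) v v' -> ev v' t i = ev v t i.
Proof.
have [r tloc] := teval_local t.
exists (absz i + r)%N => v' vv'; symmetry; apply: tloc => j k.
by rewrite /ball => ?; apply: vv'; rewrite /ball; lia.
Qed.

End Terms.

Theorem lemma5 (gT : finGroupType)
  (HG : equational_domain (fun x y : gT => (x * y)%g) (fun x : gT => x^-1%g) (1%g : gT) (@AutG gT)) :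
  qomega_compact (@mulH gT) (@invH gT) (@oneH gT) (@genA gT).
Proof.
move=> n S w Sw; apply: NNPP => no_finite.
pose ev := teval (@mulH gT) (@invH gT) (@oneH gT) (B := @genA gT) (n := n).
pose sol := solset (@mulH gT) (@invH gT) (@oneH gT) (B := @genA gT) (n := n).
pose X := {s : seq (term (@genA gT) n) | forall t, List.In t s -> S t}.
pose Q (x : X) v := sol (fun t => List.In t (sval x)) v /\ ev v w 0 <> 1%g.
have dirQ : downward_directed Q.
  move=> [s1 S1] [s2 S2].
  have S12 t : List.In t (s1 ++ s2) -> S t.
    by move=> ts; case: (List.in_app_or _ _ _ ts); [exact: S1 | exact: S2].
  exists (exist _ _ S12) => v [s12v wv].
  by split; split=> // t ts; apply: s12v; apply: List.in_or_app; [left | right].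
have Qne x : exists v, Q x v.
  case: x => s Ss; apply: NNPP => noQ; apply: no_finite; exists s; split=> // v sv.
  by apply: NNPP => wv; apply/noQ/(shift_failure_to_origin sv wv).
have nilS t : List.In t [::] -> S t by [].
have [v vQ] := cluster_point (exist _ _ nilS : X) dirQ Qne.
have vS : sol S v.
  move=> t St; apply: functional_extensionality => i.
  have St' t' : List.In t' [:: t] -> S t' by move=> [<- | []].
  have [N tN] := teval_continuous t v i.
  have [v' [[v't _] vv']] := vQ (exist _ _ St') N.
  by rewrite -(tN v' vv') (v't t (or_introl erefl)).
have [N wN] := teval_continuous w v 0.
have [v' [[_ wv'] vv']] := vQ (exist _ _ nilS) N.
by apply: wv'; rewrite /ev (wN v' vv') (Sw v vS).
Qed.
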